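(* Let $X$ be a real Hilbert space, $\mathsf{A}:X\to 2^X$ maximal monotone with nonempty zero set $S$, $J:=(Id+\mathsf{A})^{-1}$, and let $(x_n)$ be generated by (HPPA) from $x_0\in X$ and sequences $(\alpha_n)\subset\,]0,1[$, $(\beta_n)\subset(0,\infty)$, $(e_n)\subset X$. Let ${\rm E}:\mathbb{N}\to\mathbb{N}$ be monotone satisfying (Q4), and let $\chi_1:\mathbb{N}\to\mathbb{N}$ be a monotone function such that $\forall k\in\mathbb{N}\,\forall n\geq\chi_1(k)\ \big(\|J(x_n)-x_n\|\leq\frac{1}{k+1}\big)$. Let $p\in S$ and $N\in\mathbb{N}$ with $N\geq\max\{2\|x_0-p\|,\ \|x_0-p\|+1+\sum_{i=0}^{{\rm E}(0)}\|e_i\|\}$. Then for every $k\in\mathbb{N}$ and every monotone $f:\mathbb{N}\to\mathbb{N}$ there exist $n\leq\psi_{N,\chi_1}(k,f)$ and $x\in B_N$ such that $$\|J(x)-x\|\leq\frac{1}{f(n)+1}\quad\text{and}\quad\forall i\geq n\ \left(\langle x_0-x,\,x_i-x\rangle\leq\frac{1}{k+1}\right),$$ where $\psi_{N,\chi_1}(k,f):=\chi_1\big(24N(w_{\hat f,N}^{(R)}(0)+1)^2\big)$, $R:=4N^4(k+1)^2$, $\hat f(m):=f(\chi_1(m))$ and $w_{g,N}(m):=\max\{g(24N(m+1)^2),\,24N(m+1)^2\}$.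
   Context: $S:=\{x\in X: 0\in\mathsf{A}(x)\}$; for $\beta>0$, $J_\beta:=(Id+\beta\mathsf{A})^{-1}$ is the resolvent, a single-valued nonexpansive map whose fixed point set is $S$. (HPPA): $x_{n+1}:=\alpha_n x_0+(1-\alpha_n)(J_{\beta_n}(x_n)+e_n)$. (Q4): ${\rm E}$ is a Cauchy rate for $\sum\|e_i\|$, i.e. $\forall k\,\forall n\ \sum_{i={\rm E}(k)+1}^{{\rm E}(k)+n}\|e_i\|\leq\frac{1}{k+1}$. $B_N:=\{x\in X:\|x-p\|\leq N\}$. A function $f:\mathbb{N}\to\mathbb{N}$ is monotone if $f(n)\leq f(n+1)$ for all $n$. $g^{(R)}$ denotes $R$-fold composition ($g^{(0)}$ the identity). *)

From Stdlib Require Import Reals Lra Lia Arith.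
Open Scope R_scope.

Record HilbertSpace := {
  hs_car :> Type;
  hs_zero : hs_car;
  hs_add : hs_car -> hs_car -> hs_car;
  hs_opp : hs_car -> hs_car;
  hs_scal : R -> hs_car -> hs_car;
  hs_inner : hs_car -> hs_car -> R;
  hs_add_assoc : forall x y z, hs_add x (hs_add y z) = hs_add (hs_add x y) z;
  hs_add_comm : forall x y, hs_add x y = hs_add y x;
  hs_add_zero : forall x, hs_add x hs_zero = x;
  hs_add_opp : forall x, hs_add x (hs_opp x) = hs_zero;
  hs_scal_one : forall x, hs_scal 1 x = x;
  hs_scal_assoc : forall a b x, hs_scal a (hs_scal b x) = hs_scal (a * b) x;
  hs_scal_distr_l : forall a x y, hs_scal a (hs_add x y) = hs_add (hs_scal a x) (hs_scal a y);
  hs_scal_distr_r : forall a b x, hs_scal (a + b) x = hs_add (hs_scal a x) (hs_scal b x);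
  hs_inner_sym : forall x y, hs_inner x y = hs_inner y x;
  hs_inner_add_l : forall x y z, hs_inner (hs_add x y) z = hs_inner x z + hs_inner y z;
  hs_inner_scal_l : forall a x y, hs_inner (hs_scal a x) y = a * hs_inner x y;
  hs_inner_pos : forall x, 0 <= hs_inner x x;
  hs_inner_def : forall x, hs_inner x x = 0 -> x = hs_zero;
  hs_complete : forall u : nat -> hs_car,
    (forall eps, 0 < eps -> exists M, forall m n, (M <= m)%nat -> (M <= n)%nat ->
        sqrt (hs_inner (hs_add (u m) (hs_opp (u n))) (hs_add (u m) (hs_opp (u n)))) < eps) ->
    exists l, forall eps, 0 < eps -> exists M, forall n, (M <= n)%nat ->
        sqrt (hs_inner (hs_add (u n) (hs_opp l)) (hs_add (u n) (hs_opp l))) < eps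
}.

Arguments hs_zero {h}.
Arguments hs_add {h}.
Arguments hs_opp {h}.
Arguments hs_scal {h}.
Arguments hs_inner {h}.

Definition hs_sub {X : HilbertSpace} (x y : X) : X := hs_add x (hs_opp y).
Definition hs_norm {X : HilbertSpace} (x : X) : R := sqrt (hs_inner x x).

(** Set-valued operator A : X -> 2^X, given by its graph: A x u means u ∈ A(x). *)
Definition monotone_op {X : HilbertSpace} (A : X -> X -> Prop) : Prop :=
  forall x y u v, A x u -> A y v -> 0 <= hs_inner (hs_sub x y) (hs_sub u v).

Definition maximal_monotone {X : HilbertSpace} (A : X -> X -> Prop) : Prop :=
  monotone_op A /\
  forall x u, (forall y v, A y v -> 0 <= hs_inner (hs_sub x y) (hs_sub u v)) -> A x u.

(** J is the resolvent family: J b = (Id + b A)^{-1}, i.e. for b > 0,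
    J b x = y  iff  x ∈ y + b A(y). *)
Definition is_resolvent {X : HilbertSpace} (A : X -> X -> Prop) (J : R -> X -> X) : Prop :=
  forall b, 0 < b -> forall x y : X,
    J b x = y <-> exists v, A y v /\ x = hs_add y (hs_scal b v).

Definition HPPA {X : HilbertSpace} (J : R -> X -> X) (x0 : X)
  (alpha beta : nat -> R) (e : nat -> X) (x : nat -> X) : Prop :=
  x 0%nat = x0 /\
  forall n, x (S n) = hs_add (hs_scal (alpha n) x0)
                        (hs_scal (1 - alpha n) (hs_add (J (beta n) (x n)) (e n))).

(** rsum f n = f 0 + ... + f (n-1). *)
Fixpoint rsum (f : nat -> R) (n : nat) : R :=
  match n with O => 0 | S m => rsum f m + f m end.

Definition nat_monotone (f : nat -> nat) : Prop := forall n, (f n <= f (S n))%nat.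

Definition w_fun (g : nat -> nat) (N : nat) (m : nat) : nat :=
  (Nat.max (g (24 * N * (m + 1) ^ 2)) (24 * N * (m + 1) ^ 2))%nat.

Definition psi (N : nat) (chi1 : nat -> nat) (k : nat) (f : nat -> nat) : nat :=
  let fhat := fun m => f (chi1 m) in
  let Rr := (4 * N ^ 4 * (k + 1) ^ 2)%nat in
  chi1 (24 * N * (Nat.iter Rr (w_fun fhat N) 0 + 1) ^ 2)%nat.

(* Write T := J_1, which is nonexpansive and fixes p, phi y := ||x0 - y||^2 and
   g := f o chi1.  Say that y in B_N is an approximate projection of x0 at level m if
   it is a 1/(g(M)+1)-fixed point of T, with M := 24N(m+1)^2, and
   <x0 - y, z - y> <= 1/(k+1) for every 1/(M+1)-fixed point z of T in B_N.  If y fails to be one, a witness z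
   lets us move from y to u := y + t(z - y), t := 1/(4N^2(k+1)), which is still a
   1/(m+1)-fixed point of T (convex combinations of approximate fixed points are
   approximate fixed points) and lowers phi by 1/(4N^2(k+1)^2).  Starting from p and
   running the levels w^(R)(0) >= ... >= w(0) >= 0 backwards, phi would become
   negative after R+1 steps, so some level m <= w^(R)(0) admits an approximate
   projection y.  The iterates x_i stay in B_N and are 1/(M+1)-fixed points of T
   for i >= chi1(M), so n := chi1(M) works. *)

From Stdlib Require Import Reals Lra Lia Classical.
Open Scope R_scope.

Section InnerProduct.

Context {X : HilbertSpace}.
Implicit Types x y z : X.

Lemma hs_inner_zero_l y : hs_inner hs_zero y = 0.
Proof.
  pose proof (hs_inner_add_l X hs_zero hs_zero y) as H.
  rewrite hs_add_zero in H; lra.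
Qed.

Lemma hs_inner_opp_l x y : hs_inner (hs_opp x) y = - hs_inner x y.
Proof.
  pose proof (hs_inner_add_l X x (hs_opp x) y) as H.
  rewrite hs_add_opp, hs_inner_zero_l in H; lra.
Qed.

Lemma hs_inner_add_r x y z : hs_inner z (hs_add x y) = hs_inner z x + hs_inner z y.
Proof. rewrite !(hs_inner_sym X z); apply hs_inner_add_l. Qed.

Lemma hs_inner_opp_r x y : hs_inner y (hs_opp x) = - hs_inner y x.
Proof. rewrite !(hs_inner_sym X y); apply hs_inner_opp_l. Qed.

Lemma hs_inner_scal_r a x y : hs_inner y (hs_scal a x) = a * hs_inner y x.
Proof. rewrite !(hs_inner_sym X y); apply hs_inner_scal_l. Qed.

Lemma hs_inner_zero_r y : hs_inner y hs_zero = 0.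
Proof. rewrite hs_inner_sym; apply hs_inner_zero_l. Qed.

End InnerProduct.

Ltac hs_expand :=
  unfold hs_sub; repeat rewrite ?hs_inner_add_l, ?hs_inner_opp_l, ?hs_inner_scal_l,
    ?hs_inner_zero_l, ?hs_inner_add_r, ?hs_inner_opp_r, ?hs_inner_scal_r, ?hs_inner_zero_r.

Lemma hs_eq_of_inner {X : HilbertSpace} (x y : X) :
  (forall w, hs_inner x w = hs_inner y w) -> x = y.
Proof.
  intros H.
  assert (Hxy : hs_sub x y = hs_zero).
  { apply hs_inner_def. set (w := hs_sub x y). unfold w at 1. hs_expand. rewrite H. ring. }
  assert (Hx : hs_add (hs_sub x y) y = x).
  { unfold hs_sub. rewrite <- hs_add_assoc, (hs_add_comm X (hs_opp y) y), hs_add_opp.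
    apply hs_add_zero. }
  rewrite <- Hx, Hxy, hs_add_comm. apply hs_add_zero.
Qed.

Ltac hs_ext := apply hs_eq_of_inner; intro; hs_expand; ring.

Section Norm.

Context {X : HilbertSpace}.
Implicit Types a b v : X.

Lemma hs_inner_add_scal_self a b s :
  hs_inner (hs_add a (hs_scal s b)) (hs_add a (hs_scal s b)) =
  hs_inner a a + 2 * s * hs_inner a b + s ^ 2 * hs_inner b b.
Proof. hs_expand. rewrite (hs_inner_sym X b a). ring. Qed.

Lemma hs_norm_nonneg v : 0 <= hs_norm v.
Proof. apply sqrt_pos. Qed.

Lemma hs_norm_sq v : hs_norm v * hs_norm v = hs_inner v v.
Proof. apply sqrt_sqrt, hs_inner_pos. Qed.

Lemma hs_norm_le_of_sq v r : 0 <= r -> hs_inner v v <= r * r -> hs_norm v <= r.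
Proof. intros Hr H. rewrite <- hs_norm_sq in H. pose proof (hs_norm_nonneg v). nra. Qed.

Lemma hs_sq_le_of_norm_le v r : hs_norm v <= r -> hs_inner v v <= r * r.
Proof. intros H. rewrite <- hs_norm_sq. pose proof (hs_norm_nonneg v). nra. Qed.

Lemma hs_norm_sub_diag v : hs_norm (hs_sub v v) = 0.
Proof. unfold hs_norm, hs_sub. rewrite hs_add_opp, hs_inner_zero_l. apply sqrt_0. Qed.

Lemma hs_cauchy_schwarz a b : hs_inner a b <= hs_norm a * hs_norm b.
Proof.
  pose proof (hs_norm_nonneg a); pose proof (hs_norm_nonneg b).
  destruct (Req_dec (hs_inner b b) 0) as [Hb0 | Hb0].
  { apply hs_inner_def in Hb0; subst b. rewrite hs_inner_zero_r. nra. }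
  assert (Hb : 0 < hs_inner b b) by (pose proof (hs_inner_pos X b); lra).
  set (s := - (hs_inner a b / hs_inner b b)).
  assert (Hs : s * hs_inner b b = - hs_inner a b) by (unfold s; field; lra).
  pose proof (hs_inner_pos X (hs_add a (hs_scal s b))) as Hpos.
  rewrite hs_inner_add_scal_self in Hpos.
  assert (Hsq : hs_inner a b * hs_inner a b <= hs_inner a a * hs_inner b b).
  { apply (Rmult_le_pos (hs_inner b b)) in Hpos; [| lra].
    replace (hs_inner b b * (hs_inner a a + 2 * s * hs_inner a b + s ^ 2 * hs_inner b b)) with
      (hs_inner a a * hs_inner b b + 2 * (s * hs_inner b b) * hs_inner a b + (s * hs_inner b b) ^ 2)
      in Hpos by ring.
    rewrite Hs in Hpos. nra. }
  rewrite <- (hs_norm_sq a), <- (hs_norm_sq b) in Hsq.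
  assert (Hab : 0 <= hs_norm a * hs_norm b) by nra.
  replace (hs_norm a * hs_norm a * (hs_norm b * hs_norm b)) with
    ((hs_norm a * hs_norm b) * (hs_norm a * hs_norm b)) in Hsq by ring.
  nra.
Qed.

Lemma hs_norm_triangle a b : hs_norm (hs_add a b) <= hs_norm a + hs_norm b.
Proof.
  pose proof (hs_norm_nonneg a); pose proof (hs_norm_nonneg b).
  apply hs_norm_le_of_sq; [lra |].
  hs_expand. rewrite (hs_inner_sym X b a), <- (hs_norm_sq a), <- (hs_norm_sq b).
  pose proof (hs_cauchy_schwarz a b). nra.
Qed.

Lemma hs_norm_scal v t : 0 <= t -> hs_norm (hs_scal t v) = t * hs_norm v.
Proof.
  intros Ht. unfold hs_norm. hs_expand.
  rewrite <- Rmult_assoc, sqrt_mult_alt, sqrt_square; nra.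
Qed.

Lemma hs_norm_sub_sym a b : hs_norm (hs_sub a b) = hs_norm (hs_sub b a).
Proof.
  replace (hs_sub a b) with (hs_scal (-1) (hs_sub b a)) by hs_ext.
  unfold hs_norm. hs_expand. f_equal. ring.
Qed.

Lemma hs_norm_sub_triangle a b v : hs_norm (hs_sub a b) <= hs_norm (hs_sub a v) + hs_norm (hs_sub v b).
Proof.
  replace (hs_sub a b) with (hs_add (hs_sub a v) (hs_sub v b)) by hs_ext.
  apply hs_norm_triangle.
Qed.

Lemma hs_norm_sub_le_of_ball a b v r :
  hs_norm (hs_sub a v) <= r -> hs_norm (hs_sub b v) <= r -> hs_norm (hs_sub b a) <= 2 * r.
Proof.
  intros Ha Hb. eapply Rle_trans; [apply (hs_norm_sub_triangle _ _ v) |].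
  rewrite (hs_norm_sub_sym v a). lra.
Qed.

Lemma hs_inner_convex_comb_self a b t :
  hs_inner (hs_add (hs_scal (1 - t) a) (hs_scal t b)) (hs_add (hs_scal (1 - t) a) (hs_scal t b)) =
  (1 - t) * hs_inner a a + t * hs_inner b b - t * (1 - t) * hs_inner (hs_sub a b) (hs_sub a b).
Proof. hs_expand. rewrite (hs_inner_sym X b a). ring. Qed.

End Norm.

Definition nonexpansive {X : HilbertSpace} (T : X -> X) : Prop :=
  forall a b, hs_norm (hs_sub (T a) (T b)) <= hs_norm (hs_sub a b).

Definition approx_fixed {X : HilbertSpace} (T : X -> X) (m : nat) (y : X) : Prop :=
  hs_norm (hs_sub (T y) y) <= 1 / (INR m + 1).

Lemma inv_INR_succ_le (m m' : nat) : (m <= m')%nat -> 1 / (INR m' + 1) <= 1 / (INR m + 1).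
Proof.
  intros H. unfold Rdiv. rewrite !Rmult_1_l.
  apply Rinv_le_contravar; [pose proof (pos_INR m); lra |].
  apply Rplus_le_compat_r, le_INR, H.
Qed.

Lemma approx_fixed_le {X : HilbertSpace} (T : X -> X) (m m' : nat) (y : X) :
  (m <= m')%nat -> approx_fixed T m' y -> approx_fixed T m y.
Proof. intros H Hy. eapply Rle_trans; [exact Hy | apply inv_INR_succ_le, H]. Qed.

Section Resolvent.

Variables (X : HilbertSpace) (A : X -> X -> Prop) (J : R -> X -> X).
Hypothesis J_resolvent : is_resolvent A J.

Lemma resolvent_fixed_zero p b : A p hs_zero -> 0 < b -> J b p = p.
Proof.
  intros Hp Hb. apply (J_resolvent b Hb p p). exists hs_zero. split; [exact Hp | hs_ext].
Qed.

Lemma resolvent_nonexpansive b : monotone_op A -> 0 < b -> nonexpansive (J b).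
Proof.
  intros Hm Hb x y.
  destruct (proj1 (J_resolvent b Hb x (J b x)) eq_refl) as [u [Hu Hx]].
  destruct (proj1 (J_resolvent b Hb y (J b y)) eq_refl) as [v [Hv Hy]].
  pose proof (Hm _ _ _ _ Hu Hv) as Huv.
  assert (Hxy : hs_sub x y = hs_add (hs_sub (J b x) (J b y)) (hs_scal b (hs_sub u v)))
    by (rewrite Hx at 1; rewrite Hy at 1; hs_ext).
  unfold hs_norm at 2. rewrite Hxy, hs_inner_add_scal_self. apply sqrt_le_1_alt.
  pose proof (hs_inner_pos X (hs_sub u v)). nra.
Qed.

End Resolvent.

Section NonexpansiveMaps.

Variables (X : HilbertSpace) (T : X -> X).
Hypothesis T_nonexp : nonexpansive T.

Lemma nonexpansive_dist_image w v :
  hs_norm (hs_sub w (T v)) <= hs_norm (hs_sub (T w) w) + hs_norm (hs_sub w v).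
Proof.
  eapply Rle_trans; [apply (hs_norm_sub_triangle _ _ (T w)) |].
  rewrite hs_norm_sub_sym. apply Rplus_le_compat_l, T_nonexp.
Qed.

(* With a := y - Tu, b := z - Tu and D := ||z - y|| one has ||a|| <= d + tD,
   ||b|| <= d + (1-t)D, and the parallelogram-type identity for (1-t)a + tb
   leaves d^2 + 4t(1-t) dD <= d^2 + dD. *)
Lemma nonexpansive_convex_comb_residual y z t d :
  0 <= t <= 1 -> hs_norm (hs_sub (T y) y) <= d -> hs_norm (hs_sub (T z) z) <= d ->
  let u := hs_add y (hs_scal t (hs_sub z y)) in
  hs_inner (hs_sub (T u) u) (hs_sub (T u) u) <= d * d + d * hs_norm (hs_sub z y).
Proof.
  intros Ht Hy Hz u.
  set (D := hs_norm (hs_sub z y)).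
  assert (HD : 0 <= D) by apply hs_norm_nonneg.
  assert (Hd : 0 <= d) by (pose proof (hs_norm_nonneg (hs_sub (T y) y)); lra).
  assert (Ha : hs_norm (hs_sub y (T u)) <= d + t * D).
  { eapply Rle_trans; [apply nonexpansive_dist_image |].
    replace (hs_sub y u) with (hs_scal t (hs_sub y z)) by (unfold u; hs_ext).
    rewrite hs_norm_scal, (hs_norm_sub_sym y z) by lra. fold D. lra. }
  assert (Hb : hs_norm (hs_sub z (T u)) <= d + (1 - t) * D).
  { eapply Rle_trans; [apply nonexpansive_dist_image |].
    replace (hs_sub z u) with (hs_scal (1 - t) (hs_sub z y)) by (unfold u; hs_ext).
    rewrite hs_norm_scal by lra. fold D. lra. }
  apply hs_sq_le_of_norm_le in Ha, Hb.
  replace (hs_sub (T u) u) with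
    (hs_scal (-1) (hs_add (hs_scal (1 - t) (hs_sub y (T u))) (hs_scal t (hs_sub z (T u)))))
    by (unfold u; hs_ext).
  rewrite hs_inner_scal_l, hs_inner_scal_r, hs_inner_convex_comb_self.
  replace (hs_sub (hs_sub y (T u)) (hs_sub z (T u))) with (hs_sub y z) by hs_ext.
  rewrite <- (hs_norm_sq (hs_sub y z)), (hs_norm_sub_sym y z). fold D.
  assert (Hat : (1 - t) * hs_inner (hs_sub y (T u)) (hs_sub y (T u)) <= (1 - t) * ((d + t * D) * (d + t * D)))
    by (apply Rmult_le_compat_l; lra).
  assert (Hbt : t * hs_inner (hs_sub z (T u)) (hs_sub z (T u)) <= t * ((d + (1 - t) * D) * (d + (1 - t) * D)))
    by (apply Rmult_le_compat_l; lra).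
  assert (Ht4 : 4 * t * (1 - t) <= 1) by (pose proof (pow2_ge_0 (2 * t - 1)); nra).
  assert (Hdt : (4 * t * (1 - t)) * (d * D) <= 1 * (d * D)) by (apply Rmult_le_compat_r; nra).
  assert (Hexp : (1 - t) * ((d + t * D) * (d + t * D)) + t * ((d + (1 - t) * D) * (d + (1 - t) * D))
    - t * (1 - t) * (D * D) = d * d + (4 * t * (1 - t)) * (d * D)) by ring.
  lra.
Qed.

End NonexpansiveMaps.

Definition fix_rate (N m : nat) : nat := (24 * N * (m + 1) ^ 2)%nat.

Lemma INR_fix_rate N m : INR (fix_rate N m) = 24 * INR N * (INR m + 1) ^ 2.
Proof. unfold fix_rate. rewrite !mult_INR, pow_INR, plus_INR. simpl. ring. Qed.

Lemma fix_rate_sq_bound (n m d : R) : 1 <= n -> 0 <= m -> d = 1 / (24 * n * (m + 1) ^ 2 + 1) ->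
  d * d + d * (2 * n) <= (1 / (m + 1)) * (1 / (m + 1)).
Proof.
  intros Hn Hm Hd. set (q := (m + 1) ^ 2).
  assert (Hq : 1 <= q) by (unfold q; nra).
  assert (Hdq : d * (24 * n * q + 1) = 1) by (rewrite Hd; fold q; field; nra).
  assert (Hd0 : 0 < d) by (rewrite Hd; apply Rdiv_lt_0_compat; [lra | fold q; nra]).
  replace ((1 / (m + 1)) * (1 / (m + 1))) with (1 / q) by (unfold q; field; lra).
  assert (Hdn : 3 * n * d * q <= 1) by nra.
  apply (Rmult_le_reg_r q); [lra |].
  unfold Rdiv. rewrite Rmult_1_l, Rinv_l by lra. nra.
Qed.

Lemma w_fun_ge g N m : (0 < N)%nat ->
  (m <= w_fun g N m)%nat /\ (fix_rate N m <= w_fun g N m)%nat /\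
  (g (fix_rate N m) <= w_fun g N m)%nat.
Proof.
  intros HN. unfold w_fun, fix_rate. split; [| split; [apply Nat.le_max_r | apply Nat.le_max_l]].
  eapply Nat.le_trans; [| apply Nat.le_max_r]. rewrite Nat.pow_2_r. nia.
Qed.

Lemma iter_w_fun_le g N i j : (0 < N)%nat -> (i <= j)%nat -> (Nat.iter i (w_fun g N) 0 <= Nat.iter j (w_fun g N) 0)%nat.
Proof.
  intros HN. induction 1 as [| j _ IH]; [lia |].
  eapply Nat.le_trans; [exact IH | apply w_fun_ge, HN].
Qed.

Lemma nat_monotone_le h n m : nat_monotone h -> (n <= m)%nat -> (h n <= h m)%nat.
Proof. intros H. induction 1 as [| m _ IH]; [lia | specialize (H m); lia]. Qed.

Lemma rsum_nonneg f n : (forall i, 0 <= f i) -> 0 <= rsum f n.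
Proof. intros H; induction n as [| n IH]; simpl; [lra | pose proof (H n); lra]. Qed.

Lemma rsum_add f a n : rsum f (a + n) = rsum f a + rsum (fun i => f (a + i)%nat) n.
Proof.
  induction n as [| n IH]; simpl; [rewrite Nat.add_0_r; ring |].
  rewrite Nat.add_succ_r. simpl. rewrite IH. ring.
Qed.

Lemma rsum_le_mono f n m : (forall i, 0 <= f i) -> (n <= m)%nat -> rsum f n <= rsum f m.
Proof. intros H. induction 1 as [| m _ IH]; simpl; [lra | pose proof (H m); lra]. Qed.

Section ApproximateProjection.

Variables (X : HilbertSpace) (T : X -> X) (x0 p : X) (N k : nat) (g : nat -> nat).
Hypotheses (T_nonexp : nonexpansive T) (T_fixed : T p = p)
  (N_pos : (0 < N)%nat) (x0_near : 2 * hs_norm (hs_sub x0 p) <= INR N).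

Let eps := 1 / (INR k + 1).
Let phi (y : X) := hs_inner (hs_sub x0 y) (hs_sub x0 y).
Let step := eps / (4 * INR N ^ 2).
Let decrease := eps ^ 2 / (4 * INR N ^ 2).
Let R_steps := (4 * N ^ 4 * (k + 1) ^ 2)%nat.
Let level (i : nat) := Nat.iter i (w_fun g N) 0%nat.

Definition approx_proj (m : nat) (y : X) : Prop :=
  hs_norm (hs_sub y p) <= INR N /\ approx_fixed T (g (fix_rate N m)) y /\
  forall z, hs_norm (hs_sub z p) <= INR N -> approx_fixed T (fix_rate N m) z ->
    hs_inner (hs_sub x0 y) (hs_sub z y) <= eps.

Let N_ge1 : 1 <= INR N.
Proof. apply (le_INR 1), N_pos. Qed.

Lemma eps_pos : 0 < eps <= 1.
Proof.
  unfold eps. pose proof (pos_INR k). split; [apply Rdiv_lt_0_compat; lra |].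
  unfold Rdiv. rewrite Rmult_1_l, <- Rinv_1. apply Rinv_le_contravar; lra.
Qed.

Lemma convex_comb_approx_fixed y z t m :
  hs_norm (hs_sub y p) <= INR N -> hs_norm (hs_sub z p) <= INR N -> 0 <= t <= 1 ->
  approx_fixed T (fix_rate N m) y -> approx_fixed T (fix_rate N m) z ->
  approx_fixed T m (hs_add y (hs_scal t (hs_sub z y))).
Proof.
  intros Hy Hz Ht HTy HTz.
  pose proof (pos_INR m). pose proof (pos_INR (fix_rate N m)).
  apply hs_norm_le_of_sq; [apply Rlt_le, Rdiv_lt_0_compat; lra |].
  eapply Rle_trans; [apply (nonexpansive_convex_comb_residual _ _ T_nonexp _ _ _ _ Ht HTy HTz) |].
  eapply Rle_trans; [apply Rplus_le_compat_l, Rmult_le_compat_l;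
    [| exact (hs_norm_sub_le_of_ball _ _ _ _ Hy Hz)] |].
  - apply Rlt_le, Rdiv_lt_0_compat; lra.
  - apply fix_rate_sq_bound; [lra | lra |]. now rewrite INR_fix_rate.
Qed.

(* Moving by [step] towards a witness [z] gains [2 step eps] on the linear term
   and loses at most [step^2 (2N)^2] on the quadratic one. *)
Lemma descent_step y z m :
  hs_norm (hs_sub y p) <= INR N -> hs_norm (hs_sub z p) <= INR N ->
  approx_fixed T (fix_rate N m) y -> approx_fixed T (fix_rate N m) z ->
  eps < hs_inner (hs_sub x0 y) (hs_sub z y) ->
  exists u, hs_norm (hs_sub u p) <= INR N /\ approx_fixed T m u /\ phi u <= phi y - decrease.
Proof.
  intros Hy Hz HTy HTz Hlin. pose proof eps_pos.
  assert (Hstep : 0 <= step <= 1).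
  { unfold step. split; [apply Rlt_le, Rdiv_lt_0_compat; nra |].
    apply (Rmult_le_reg_r (4 * INR N ^ 2)); [nra |].
    unfold Rdiv. rewrite Rmult_assoc, Rinv_l; nra. }
  exists (hs_add y (hs_scal step (hs_sub z y))). split; [| split].
  - replace (hs_sub (hs_add y (hs_scal step (hs_sub z y))) p) with
      (hs_add (hs_scal (1 - step) (hs_sub y p)) (hs_scal step (hs_sub z p))) by hs_ext.
    eapply Rle_trans; [apply hs_norm_triangle |].
    rewrite !hs_norm_scal by lra. nra.
  - now apply convex_comb_approx_fixed.
  - unfold phi.
    replace (hs_sub x0 (hs_add y (hs_scal step (hs_sub z y)))) with
      (hs_add (hs_sub x0 y) (hs_scal (- step) (hs_sub z y))) by hs_ext.
    rewrite hs_inner_add_scal_self.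
    assert (Hzy : hs_inner (hs_sub z y) (hs_sub z y) <= (2 * INR N) * (2 * INR N)).
    { apply hs_sq_le_of_norm_le, (hs_norm_sub_le_of_ball _ _ p); assumption. }
    assert (Hbal : - 2 * step * eps + step ^ 2 * ((2 * INR N) * (2 * INR N)) = - decrease)
      by (unfold step, decrease; field; lra).
    nra.
Qed.

Lemma descent_chain :
  ~ (exists m, (m <= level R_steps)%nat /\ exists y, approx_proj m y) ->
  forall j, (j <= R_steps + 1)%nat ->
  exists y, hs_norm (hs_sub y p) <= INR N /\ approx_fixed T (level (R_steps + 1 - j)) y /\
    phi y <= phi p - INR j * decrease.
Proof.
  intros Hnone. induction j as [| j IH]; intros Hj.
  - exists p. rewrite hs_norm_sub_diag. split; [lra | split; [| simpl; lra]].
    unfold approx_fixed. rewrite T_fixed, hs_norm_sub_diag.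
    apply Rlt_le, Rdiv_lt_0_compat; [lra | pose proof (pos_INR (level (R_steps + 1 - 0))); lra].
  - destruct (IH ltac:(lia)) as [y [Hy [HTy Hphi]]].
    replace (R_steps + 1 - j)%nat with (S (R_steps - j)) in HTy by lia.
    replace (R_steps + 1 - S j)%nat with (R_steps - j)%nat by lia.
    set (m := level (R_steps - j)) in *.
    change (level (S (R_steps - j))) with (w_fun g N m) in HTy.
    destruct (w_fun_ge g N m N_pos) as [_ [Hrate Hg]].
    destruct (classic (forall z, hs_norm (hs_sub z p) <= INR N -> approx_fixed T (fix_rate N m) z ->
      hs_inner (hs_sub x0 y) (hs_sub z y) <= eps)) as [Hproj | Hwit].
    + exfalso. apply Hnone. exists m. split; [apply iter_w_fun_le; [exact N_pos | lia] |].
      exists y. split; [exact Hy | split; [exact (approx_fixed_le _ _ _ _ Hg HTy) | exact Hproj]].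
    + apply not_all_ex_not in Hwit as [z Hz].
      apply imply_to_and in Hz as [Hzp Hz]. apply imply_to_and in Hz as [HTz Hz].
      destruct (descent_step y z m Hy Hzp (approx_fixed_le _ _ _ _ Hrate HTy) HTz
        (Rnot_le_lt _ _ Hz)) as [u [Hu [HTu Hphiu]]].
      exists u. split; [exact Hu | split; [exact HTu |]]. rewrite S_INR. lra.
Qed.

(* R_steps is chosen so that (R_steps + 1) * decrease exceeds N^2 >= phi p. *)
Lemma approx_proj_exists : exists m, (m <= level R_steps)%nat /\ exists y, approx_proj m y.
Proof.
  apply NNPP. intros Hnone.
  destruct (descent_chain Hnone (R_steps + 1) (le_n _)) as [y [_ [_ Hphi]]].
  pose proof (hs_inner_pos X (hs_sub x0 y)). pose proof (hs_norm_nonneg (hs_sub x0 p)).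
  assert (Hp : phi p <= INR N ^ 2 / 4) by (unfold phi; rewrite <- hs_norm_sq; nra).
  assert (Hdec : 0 < decrease) by (pose proof eps_pos; unfold decrease; apply Rdiv_lt_0_compat; nra).
  assert (Hsteps : INR (R_steps + 1) * decrease = INR N ^ 2 + decrease).
  { unfold R_steps, decrease, eps. rewrite plus_INR, !mult_INR, !pow_INR, plus_INR.
    simpl (INR 1). simpl (INR 4). field. pose proof (pos_INR k). lra. }
  unfold phi in *. nra.
Qed.

End ApproximateProjection.

Section HPPABounds.

Variables (X : HilbertSpace) (A : X -> X -> Prop) (J : R -> X -> X)
  (x0 : X) (alpha beta : nat -> R) (e : nat -> X) (x : nat -> X) (p : X).
Hypotheses (A_monotone : monotone_op A) (J_resolvent : is_resolvent A J)
  (alpha_range : forall n, 0 < alpha n < 1) (beta_pos : forall n, 0 < beta n)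
  (x_HPPA : HPPA J x0 alpha beta e x) (p_zero : A p hs_zero).

Lemma HPPA_dist_le n :
  hs_norm (hs_sub (x n) p) <= hs_norm (hs_sub x0 p) + rsum (fun i => hs_norm (e i)) n.
Proof.
  destruct x_HPPA as [Hx0 Hxs]. induction n as [| n IH]; cbn [rsum].
  { rewrite Hx0. lra. }
  rewrite Hxs. set (a := alpha n). set (Jb := J (beta n)).
  assert (Ha : 0 < a < 1) by apply alpha_range.
  assert (HJ : hs_norm (hs_sub (Jb (x n)) (Jb p)) <= hs_norm (hs_sub (x n) p))
    by (apply (resolvent_nonexpansive X A); auto).
  replace (hs_sub (hs_add (hs_scal a x0) (hs_scal (1 - a) (hs_add (Jb (x n)) (e n)))) p) with
    (hs_add (hs_scal a (hs_sub x0 p)) (hs_scal (1 - a) (hs_add (hs_sub (Jb (x n)) (Jb p)) (e n))))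
    by (unfold Jb; rewrite (resolvent_fixed_zero X A J J_resolvent p (beta n) p_zero (beta_pos n)); hs_ext).
  eapply Rle_trans; [apply hs_norm_triangle |].
  rewrite !hs_norm_scal by lra.
  pose proof (hs_norm_triangle (hs_sub (Jb (x n)) (Jb p)) (e n)).
  pose proof (hs_norm_nonneg (e n)).
  pose proof (rsum_nonneg (fun i => hs_norm (e i)) n (fun i => hs_norm_nonneg (e i))).
  nra.
Qed.

Lemma HPPA_dist_le_tail (E0 : nat) :
  (forall n, rsum (fun i => hs_norm (e (E0 + 1 + i)%nat)) n <= 1) ->
  forall n, hs_norm (hs_sub (x n) p) <=
    hs_norm (hs_sub x0 p) + rsum (fun i => hs_norm (e i)) (E0 + 1) + 1.
Proof.
  intros Htail n.
  pose proof (rsum_add (fun i => hs_norm (e i)) (E0 + 1) n) as Hsplit.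
  pose proof (rsum_le_mono (fun i => hs_norm (e i)) n (E0 + 1 + n)
    (fun i => hs_norm_nonneg (e i)) ltac:(lia)).
  pose proof (HPPA_dist_le n). pose proof (Htail n). lra.
Qed.

End HPPABounds.

Theorem mainTheorem4
  (X : HilbertSpace) (A : X -> X -> Prop) (J : R -> X -> X)
  (x0 : X) (alpha beta : nat -> R) (e : nat -> X) (x : nat -> X)
  (E chi1 : nat -> nat) (p : X) (N : nat) :
  maximal_monotone A ->
  (exists z : X, A z hs_zero) ->
  is_resolvent A J ->
  (forall n, 0 < alpha n < 1) ->
  (forall n, 0 < beta n) ->
  HPPA J x0 alpha beta e x ->
  nat_monotone E ->
  (forall k n : nat, rsum (fun i => hs_norm (e (E k + 1 + i)%nat)) n <= 1 / (INR k + 1)) ->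
  nat_monotone chi1 ->
  (forall k n : nat, (chi1 k <= n)%nat -> hs_norm (hs_sub (J 1 (x n)) (x n)) <= 1 / (INR k + 1)) ->
  A p hs_zero ->
  2 * hs_norm (hs_sub x0 p) <= INR N ->
  hs_norm (hs_sub x0 p) + 1 + rsum (fun i => hs_norm (e i)) (E 0%nat + 1) <= INR N ->
  forall (k : nat) (f : nat -> nat), nat_monotone f ->
    exists n : nat, (n <= psi N chi1 k f)%nat /\
      exists y : X, hs_norm (hs_sub y p) <= INR N /\
        hs_norm (hs_sub (J 1 y) y) <= 1 / (INR (f n) + 1) /\
        forall i : nat, (n <= i)%nat -> hs_inner (hs_sub x0 y) (hs_sub (x i) y) <= 1 / (INR k + 1).
Proof.
  intros [A_mono _] _ HJ Halpha Hbeta Hx _ Htail Hchi_mono Hchi Hp HN1 HN2 k f Hf.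
  assert (HN : (0 < N)%nat).
  { apply INR_lt. pose proof (hs_norm_nonneg (hs_sub x0 p)).
    pose proof (rsum_nonneg (fun i => hs_norm (e i)) (E 0%nat + 1) (fun i => hs_norm_nonneg (e i))).
    simpl. lra. }
  assert (Hball : forall i, hs_norm (hs_sub (x i) p) <= INR N).
  { intros i. enough (hs_norm (hs_sub (x i) p) <=
      hs_norm (hs_sub x0 p) + rsum (fun i => hs_norm (e i)) (E 0%nat + 1) + 1) by lra.
    apply (HPPA_dist_le_tail X A J x0 alpha beta e x p); auto.
    intros n. pose proof (Htail 0%nat n) as H0. simpl in H0. lra. }
  destruct (approx_proj_exists X (J 1) x0 p N k (fun m => f (chi1 m))
    (resolvent_nonexpansive X A J HJ 1 A_mono Rlt_0_1)
    (resolvent_fixed_zero X A J HJ p 1 Hp Rlt_0_1) HN HN1) as [m [Hm [y [Hy [HTy Hproj]]]]].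
  exists (chi1 (fix_rate N m)). split.
  - unfold psi. apply nat_monotone_le; [exact Hchi_mono |].
    unfold fix_rate. apply Nat.mul_le_mono_l, Nat.pow_le_mono_l. lia.
  - exists y. split; [exact Hy | split; [exact HTy |]].
    intros i Hi. apply Hproj; [apply Hball | apply Hchi, Hi].
Qed.
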